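(* For every $n\in\mathbb{N}$, the set $ISD(\mathbb{R}^n)$, equipped with pointwise addition, pointwise multiplication, pointwise $\min$ (as $\wedge$) and pointwise $\max$ (as $\vee$), is an $f$-ring. In particular it is closed under pointwise sums and products.
   Context: $ISD(\mathbb{R}^n)$ is the smallest set of functions $\mathbb{R}^n \to \mathbb{R}$ containing all real polynomials in $n$ variables and closed under pointwise $\min$ and $\max$. An $\ell$-ring is a ring with identity (commutative addition) that is also a lattice with operations $\wedge,\vee$ (with $f\le g$ meaning $f\wedge g=f$) such that $f\le g$ implies $h+f\le h+g$ for all $h$, and $f,g\ge0$ implies $fg\ge0$. An $f$-ring is an $\ell$-ring such that whenever $f,g,h\ge0$ and $g\wedge h=0$, one has $fg\wedge h=0$ and $gf\wedge h=0$. *)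

From HB Require Import structures.
From mathcomp Require Import all_boot all_order all_algebra.
From mathcomp Require Import reals.
From mathcomp Require Import mpoly.
Set Implicit Arguments. Unset Strict Implicit. Unset Printing Implicit Defensive.
Import Order.TTheory GRing.Theory Num.Theory.
Local Open Scope ring_scope.

Inductive ISD (R : realType) (n : nat) : (('I_n -> R) -> R) -> Prop :=
  | ISD_poly (p : {mpoly R[n]}) : ISD (fun x => p.@[x])
  | ISD_min f g : ISD f -> ISD g -> ISD (fun x => Num.min (f x) (g x))
  | ISD_max f g : ISD f -> ISD g -> ISD (fun x => Num.max (f x) (g x)).

Definition is_lring (T : Type) (zero one : T) (add mul : T -> T -> T)
    (opp : T -> T) (meet join : T -> T -> T) : Prop :=
  let le := fun f g => meet f g = f in
  (forall f g h, add f (add g h) = add (add f g) h) /\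
  (forall f g, add f g = add g f) /\
  (forall f, add zero f = f) /\
  (forall f, add (opp f) f = zero) /\
  (forall f g h, mul f (mul g h) = mul (mul f g) h) /\
  (forall f, mul one f = f) /\
  (forall f, mul f one = f) /\
  (forall f g h, mul f (add g h) = add (mul f g) (mul f h)) /\
  (forall f g h, mul (add f g) h = add (mul f h) (mul g h)) /\
  (forall f g, meet f g = meet g f) /\
  (forall f g, join f g = join g f) /\
  (forall f g h, meet f (meet g h) = meet (meet f g) h) /\
  (forall f g h, join f (join g h) = join (join f g) h) /\
  (forall f g, meet f (join f g) = f) /\
  (forall f g, join f (meet f g) = f) /\
  (forall f g h, le f g -> le (add h f) (add h g)) /\
  (forall f g, le zero f -> le zero g -> le zero (mul f g)).

Definition is_fring (T : Type) (zero one : T) (add mul : T -> T -> T)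
    (opp : T -> T) (meet join : T -> T -> T) : Prop :=
  is_lring zero one add mul opp meet join /\
  let le := fun f g => meet f g = f in
  forall f g h, le zero f -> le zero g -> le zero h -> meet g h = zero ->
    meet (mul f g) h = zero /\ meet (mul g f) h = zero.

From HB Require Import structures.
From mathcomp Require Import all_boot all_order all_algebra.
From mathcomp Require Import reals.
From mathcomp Require Import mpoly.
From mathcomp Require Import ring lra.
From Stdlib Require Import FunctionalExtensionality ProofIrrelevance.
Set Implicit Arguments. Unset Strict Implicit. Unset Printing Implicit Defensive.
Import Order.TTheory GRing.Theory Num.Theory.
Local Open Scope ring_scope.

(* Sums and negatives of ISD functions stay in ISD because [+] and [-]
   distribute over [min]/[max].  For products it suffices to treat positive
   parts, as [f g = f+ g+ - f+ (-g)+ - (-f)+ g+ + (-f)+ (-g)+].  Multiplication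
   by a nonnegative factor distributes over [min]/[max], which reduces [f+ g+]
   to the case of two polynomials, and [p+ q+] is the min of the positive
   parts of two polynomials.  The f-ring axioms hold in the reals and are
   inherited by any structure mapped into them by a jointly injective family
   of homomorphisms, here the evaluations at the points of R^n. *)

Section FringOfSeparatingHoms.

Variables (S A I : Type) (e : I -> S -> A).
Variables (zero one : S) (add mul meet join : S -> S -> S) (opp : S -> S).
Variables (zeroA oneA : A) (addA mulA meetA joinA : A -> A -> A) (oppA : A -> A).
Hypothesis e_sep : forall f g, (forall i, e i f = e i g) -> f = g.
Hypothesis e0 : forall i, e i zero = zeroA.
Hypothesis e1 : forall i, e i one = oneA.
Hypothesis eD : forall i f g, e i (add f g) = addA (e i f) (e i g).
Hypothesis eM : forall i f g, e i (mul f g) = mulA (e i f) (e i g).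
Hypothesis eN : forall i f, e i (opp f) = oppA (e i f).
Hypothesis eI : forall i f g, e i (meet f g) = meetA (e i f) (e i g).
Hypothesis eU : forall i f g, e i (join f g) = joinA (e i f) (e i g).

Lemma is_fring_sep :
  is_fring zeroA oneA addA mulA oppA meetA joinA ->
  is_fring zero one add mul opp meet join.
Proof.
rewrite /is_fring /is_lring /=.
case=> -[? [? [? [? [? [? [? [? [? [? [? [? [? [? [? [? ?]]]]]]]]]]]]]]]] fr.
(repeat split) => *; apply: e_sep => i;
  repeat match goal with H : @eq S _ _ |- _ =>
    move/(congr1 (e i)): H; rewrite ?(e0, e1, eD, eM, eN, eI, eU) => ? end;
  rewrite ?(e0, e1, eD, eM, eN, eI, eU); auto.
- by case: (fr (e i f) (e i g) (e i h)).
- by case: (fr (e i f) (e i g) (e i h)).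
Qed.

End FringOfSeparatingHoms.

Lemma is_fring_real (R : realDomainType) :
  is_fring (0 : R) 1 +%R *%R -%R Num.min Num.max.
Proof.
rewrite /is_fring /is_lring /=.
split; first repeat split.
- exact: addrA.
- exact: addrC.
- exact: add0r.
- exact: addNr.
- exact: mulrA.
- exact: mul1r.
- exact: mulr1.
- exact: mulrDr.
- exact: mulrDl.
- exact: minC.
- exact: maxC.
- exact: minA.
- exact: maxA.
- exact: maxKx.
- exact: minKx.
- by move=> a b c /min_idPl ab; apply/min_idPl; rewrite lerD2l.
- by move=> a b /min_idPl a0 /min_idPl b0; apply/min_idPl; rewrite mulr_ge0.
- move=> a b c /min_idPl a0 /min_idPl b0 /min_idPl c0.
  have [_ ->|_ ->] := leP b c.
    by rewrite mulr0 mul0r min_l.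
  by rewrite !min_r // mulr_ge0.
Qed.

(* [(s + s^3)+] vanishes when [a, b <= 0] and dominates [a b] when
   [a, b >= 0], since then [a b <= s^2 <= s + s^3]. *)
Lemma posp_mul (R : realDomainType) (a b : R) :
  Num.max a 0 * Num.max b 0 =
  Num.min (Num.max (a * b) 0) (Num.max ((a + b) + (a + b) ^+ 3) 0).
Proof.
set s := a + b.
have max_ge0 (x : R) : 0 <= Num.max x 0 by rewrite le_max lexx orbT.
have [a0|a0] := leP a 0; have [b0|b0] := leP b 0.
- have s3_le0 : s + s ^+ 3 <= 0 by rewrite /s; nra.
  by rewrite mul0r (max_r s3_le0) minC min_l.
- by rewrite mul0r max_r ?min_l //; nra.
- by rewrite mulr0 max_r ?min_l //; nra.
- have s_ge0 : 0 <= s by rewrite /s; lra.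
  have s_le_s3 : s ^+ 2 <= s + s ^+ 3.
    by have := mulr_ge0 s_ge0 (sqr_ge0 (s - 1)); nra.
  have ab_le : a * b <= s + s ^+ 3 by rewrite /s in s_le_s3 *; nra.
  rewrite [Num.max (a * b) 0]max_l ?mulr_ge0 ?ltW //.
  by rewrite max_l ?min_l //; apply: le_trans ab_le; rewrite mulr_ge0 ?ltW.
Qed.

Lemma posp_sub_posN (R : realDomainType) (a : R) : Num.max a 0 - Num.max (- a) 0 = a.
Proof. by rewrite -[X in - Num.max _ X]oppr0 -oppr_min opprK addr_max_min addr0. Qed.

Lemma posp_max (R : realDomainType) (a b : R) :
  Num.max (Num.max a b) 0 = Num.max (Num.max a 0) (Num.max b 0).
Proof. by rewrite maxACA maxxx. Qed.

Section ISDClosure.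

Variables (R : realType) (n : nat).
Implicit Types f g : ('I_n -> R) -> R.

Lemma ISD_eq f g : ISD f -> (forall x, f x = g x) -> ISD g.
Proof. by move=> + fg; rewrite (functional_extensionality _ _ fg). Qed.

Lemma ISD_const (c : R) : ISD (fun _ : 'I_n -> R => c).
Proof. by apply: (ISD_eq (ISD_poly c%:MP)) => x; rewrite mevalC. Qed.

Lemma ISD_opp f : ISD f -> ISD (fun x => - f x).
Proof.
elim=> [p|f1 f2 _ IH1 _ IH2|f1 f2 _ IH1 _ IH2].
- by apply: (ISD_eq (ISD_poly (- p))) => x; rewrite mevalN.
- by apply: (ISD_eq (ISD_max IH1 IH2)) => x; rewrite oppr_min.
- by apply: (ISD_eq (ISD_min IH1 IH2)) => x; rewrite oppr_max.
Qed.

Lemma ISD_add f g : ISD f -> ISD g -> ISD (fun x => f x + g x).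
Proof.
move=> Hf; elim: Hf g => [p|f1 f2 _ IH1 _ IH2|f1 f2 _ IH1 _ IH2] g Hg.
- elim: Hg => [q|g1 g2 _ IH1 _ IH2|g1 g2 _ IH1 _ IH2].
  + by apply: (ISD_eq (ISD_poly (p + q))) => x; rewrite mevalD.
  + by apply: (ISD_eq (ISD_min IH1 IH2)) => x; rewrite addr_minr.
  + by apply: (ISD_eq (ISD_max IH1 IH2)) => x; rewrite addr_maxr.
- by apply: (ISD_eq (ISD_min (IH1 _ Hg) (IH2 _ Hg))) => x; rewrite addr_minl.
- by apply: (ISD_eq (ISD_max (IH1 _ Hg) (IH2 _ Hg))) => x; rewrite addr_maxl.
Qed.

Lemma ISD_mul_posp f g : ISD f -> ISD g ->
  ISD (fun x => Num.max (f x) 0 * Num.max (g x) 0).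
Proof.
have max_ge0 (a : R) : 0 <= Num.max a 0 by rewrite le_max lexx orbT.
move=> Hf; elim: Hf g => [p|f1 f2 _ IH1 _ IH2|f1 f2 _ IH1 _ IH2] g Hg.
- elim: Hg => [q|g1 g2 _ IH1 _ IH2|g1 g2 _ IH1 _ IH2].
  + apply: (ISD_eq (ISD_min (ISD_max (ISD_poly (p * q)) (ISD_const 0))
      (ISD_max (ISD_poly ((p + q) + (p + q) ^+ 3)) (ISD_const 0)))) => x.
    by rewrite posp_mul mevalM !mevalD rmorphXn /= mevalD.
  + apply: (ISD_eq (ISD_min IH1 IH2)) => x.
    by rewrite [in RHS]max_minl [in RHS]minr_pMr.
  + apply: (ISD_eq (ISD_max IH1 IH2)) => x.
    by rewrite [in RHS]posp_max [in RHS]maxr_pMr.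
- apply: (ISD_eq (ISD_min (IH1 _ Hg) (IH2 _ Hg))) => x.
  by rewrite [in RHS]max_minl [in RHS]minr_pMl.
- apply: (ISD_eq (ISD_max (IH1 _ Hg) (IH2 _ Hg))) => x.
  by rewrite [in RHS]posp_max [in RHS]maxr_pMl.
Qed.

Lemma ISD_mul f g : ISD f -> ISD g -> ISD (fun x => f x * g x).
Proof.
move=> Hf Hg; have [Hf' Hg'] := (ISD_opp Hf, ISD_opp Hg).
apply: (ISD_eq (ISD_add
  (ISD_add (ISD_mul_posp Hf Hg) (ISD_opp (ISD_mul_posp Hf Hg')))
  (ISD_add (ISD_opp (ISD_mul_posp Hf' Hg)) (ISD_mul_posp Hf' Hg')))) => x.
by rewrite -[in RHS](posp_sub_posN (f x)) -[in RHS](posp_sub_posN (g x)); ring.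
Qed.

End ISDClosure.

Theorem mainTheorem7 (R : realType) (n : nat) :
  exists (zero one : {f | ISD (R := R) (n := n) f})
         (add mul meet join : {f | ISD f} -> {f | ISD f} -> {f | ISD f})
         (opp : {f | ISD f} -> {f | ISD f}),
    proj1_sig zero = (fun _ => 0) /\
        proj1_sig one = (fun _ => 1) /\
        (forall f g, proj1_sig (add f g) = (fun x => proj1_sig f x + proj1_sig g x)) /\
        (forall f g, proj1_sig (mul f g) = (fun x => proj1_sig f x * proj1_sig g x)) /\
        (forall f, proj1_sig (opp f) = (fun x => - proj1_sig f x)) /\
        (forall f g, proj1_sig (meet f g) = (fun x => Num.min (proj1_sig f x) (proj1_sig g x))) /\
        (forall f g, proj1_sig (join f g) = (fun x => Num.max (proj1_sig f x) (proj1_sig g x))) /\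
      is_fring zero one add mul opp meet join.
Proof.
pose S := {f | ISD (R := R) (n := n) f}.
exists (exist _ _ (@ISD_const R n 0)), (exist _ _ (@ISD_const R n 1)).
exists (fun f g : S => exist _ _ (ISD_add (proj2_sig f) (proj2_sig g))).
exists (fun f g : S => exist _ _ (ISD_mul (proj2_sig f) (proj2_sig g))).
exists (fun f g : S => exist _ _ (ISD_min (proj2_sig f) (proj2_sig g))).
exists (fun f g : S => exist _ _ (ISD_max (proj2_sig f) (proj2_sig g))).
exists (fun f : S => exist _ _ (ISD_opp (proj2_sig f))).
do 7 (split; first by []).
apply: (is_fring_sep (e := fun x (f : S) => proj1_sig f x)) (is_fring_real R) => //.
move=> f g fg; apply: eq_sig_hprop.
- by move=> x p q; apply: proof_irrelevance.
- exact: functional_extensionality.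
Qed.
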